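(* Let $\mathcal E$ be an exchangeability system for a noncommutative probability space $(\mathcal A,\phi)$, let $n\ge 1$ and $X_1,\dots,X_n\in\mathcal A$. Suppose there is a subset $I\subseteq[n]$ with $I\neq\emptyset$ and $I\neq[n]$ such that the families $(X_j)_{j\in I}$ and $(X_j)_{j\in[n]\setminus I}$ are $\mathcal E$-independent. Then $K_n(X_1,\dots,X_n)=0$.
   Context: A noncommutative probability space is a pair $(\mathcal A,\phi)$ of a complex unital algebra $\mathcal A$ and a unital linear functional $\phi$. An exchangeability system $\mathcal E$ for $(\mathcal A,\phi)$ consists of a noncommutative probability space $(\mathcal U,\tilde\phi)$ and a family $(\iota_k)_{k\in\mathbb N}$ of embeddings (injective unital algebra homomorphisms) $\iota_k:\mathcal A\to\mathcal A_k\subseteq\mathcal U$ with $\tilde\phi\circ\iota_k=\phi$; write $X^{(k)}=\iota_k(X)$. It is required that for all $X_1,\dots,X_n\in\mathcal A$, all indices $i_1,\dots,i_n\in\mathbb N$ and every bijection $\sigma$ of $\mathbb N$, $\tilde\phi(X_1^{(i_1)}\cdots X_n^{(i_n)})=\tilde\phi(X_1^{(\sigma(i_1))}\cdots X_n^{(\sigma(i_n))})$. Thus this value depends only on the kernel of $h:j\mapsto i_j$ (the partition of $[n]=\{1,\dots,n\}$ into the level sets of $h$); for a partition $\pi$ of $[n]$ this value is denoted $\phi_\pi(X_1,\dots,X_n)$. For a primitive $n$-th root of unity $\omega$ put $X_j^\omega=\sum_{k=1}^n\omega^kX_j^{(k)}$ and define the cumulant $K_n(X_1,\dots,X_n)=\frac1n\tilde\phi(X_1^\omega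 X_2^\omega\cdots X_n^\omega)$. Subalgebras $\mathcal B,\mathcal C\subseteq\mathcal A$ are $\mathcal E$-independent if for all $X_1,\dots,X_n\in\mathcal B\cup\mathcal C$ and every decomposition $[n]=I\sqcup J$ with $X_i\in\mathcal B$ for $i\in I$ and $X_i\in\mathcal C$ for $i\in J$, one has $\phi_\pi(X_1,\dots,X_n)=\phi_{\pi'}(X_1,\dots,X_n)$ whenever the partitions $\pi,\pi'$ of $[n]$ satisfy $\pi|_I=\pi'|_I$ and $\pi|_J=\pi'|_J$. Two families of elements of $\mathcal A$ are $\mathcal E$-independent if the subalgebras they generate are. *)

From HB Require Import structures.
From mathcomp Require Import all_boot all_order all_algebra.
From mathcomp Require Import reals.
From mathcomp Require Import complex.
Set Implicit Arguments. Unset Strict Implicit. Unset Printing Implicit Defensive.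
Import Order.TTheory GRing.Theory Num.Theory.
Local Open Scope ring_scope.

Section Defs.
Variable (R : realType).
Local Notation C := (R[i]).

Definition unital_functional (A : algType C) (phi : A -> C) : Prop :=
  (forall (a : C) (x y : A), phi (a *: x + y) = a * phi x + phi y) /\ phi 1 = 1.

Definition embedding (A U : algType C) (f : A -> U) : Prop :=
  [/\ forall (a : C) (x y : A), f (a *: x + y) = a *: f x + f y,
      forall x y : A, f (x * y) = f x * f y,
      f 1 = 1 & injective f].

Definition mixed_moment (A U : algType C) (phit : U -> C) (iota : nat -> A -> U)
  (m : nat) (X : 'I_m -> A) (h : 'I_m -> nat) : C :=
  phit (\prod_(j < m) iota (h j) (X j)).

Definition exch_system (A U : algType C) (phi : A -> C) (phit : U -> C)
  (iota : nat -> A -> U) : Prop :=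
  [/\ unital_functional phit,
      forall k, embedding (iota k),
      forall k (x : A), phit (iota k x) = phi x &
      forall m (X : 'I_m -> A) (h : 'I_m -> nat) (sigma : nat -> nat),
        bijective sigma ->
        mixed_moment phit iota X h = mixed_moment phit iota X (sigma \o h)].

Definition same_kernel_on (m : nat) (d : 'I_m -> bool) (b : bool)
  (h h' : 'I_m -> nat) : Prop :=
  forall j k, d j = b -> d k = b -> (h j = h k <-> h' j = h' k).

(* E-independence of two subsets (subalgebras) B, Cs of A.  phi_pi is phit
   evaluated at any index function h with kernel pi; so "pi|_I = pi'|_I and
   pi|_J = pi'|_J" is expressed via index functions h, h'. *)
Definition E_independent (A U : algType C) (phit : U -> C) (iota : nat -> A -> U)
  (B Cs : A -> Prop) : Prop :=
  forall m (X : 'I_m -> A) (d : 'I_m -> bool),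
    (forall j, if d j then B (X j) else Cs (X j)) ->
    forall h h' : 'I_m -> nat,
      same_kernel_on d true h h' -> same_kernel_on d false h h' ->
      mixed_moment phit iota X h = mixed_moment phit iota X h'.

Definition is_subalgebra (A : algType C) (S : A -> Prop) : Prop :=
  [/\ S 1, forall (a : C) x, S x -> S (a *: x),
      forall x y, S x -> S y -> S (x + y) &
      forall x y, S x -> S y -> S (x * y)].

Definition gen_subalg (A : algType C) (S : A -> Prop) : A -> Prop :=
  fun x => forall T : A -> Prop, is_subalgebra T -> (forall y, S y -> T y) -> T x.

Definition family_set (A : algType C) (n : nat) (X : 'I_n -> A) (I : {set 'I_n})
  : A -> Prop := fun x => exists2 j, j \in I & x = X j.

Definition E_independent_families (A U : algType C) (phit : U -> C)
  (iota : nat -> A -> U) (n : nat) (X : 'I_n -> A) (I J : {set 'I_n}) : Prop :=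
  E_independent phit iota (gen_subalg (family_set X I)) (gen_subalg (family_set X J)).

Definition X_omega (A U : algType C) (iota : nat -> A -> U) (n : nat) (w : C)
  (x : A) : U := \sum_(1 <= k < n.+1) (w ^+ k) *: iota k x.

Definition cumulant (A U : algType C) (phit : U -> C) (iota : nat -> A -> U)
  (n : nat) (w : C) (X : 'I_n -> A) : C :=
  n%:R^-1 * phit (\prod_(j < n) X_omega iota n w (X j)).

End Defs.

(** The cumulant is [1/n] times a sum, over all index functions
    [f : [n] -> [n]], of [w^(f 1 + ... + f n)] times the mixed moment with
    indices [f].  Rotating the indices cyclically on [I] only, and leaving
    them unchanged off [I], permutes the index functions; it preserves the
    kernel of [f] restricted to [I] and to its complement, hence, by
    independence, every mixed moment, while it multiplies every weight by
    [w^#|I|].  So the sum [S] satisfies [S = w^#|I| S], and [w^#|I| <> 1]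
    because [0 < #|I| < n] and [w] is a primitive [n]-th root of unity. *)
From HB Require Import structures.
From mathcomp Require Import all_boot all_order all_algebra.
From mathcomp Require Import reals complex.
Set Implicit Arguments. Unset Strict Implicit.
Import Order.TTheory GRing.Theory Num.Theory.
Local Open Scope ring_scope.

Lemma sum_eq0_reindex_scale (F : idomainType) (T : finType) (g : T -> T)
    (c : F) (G : T -> F) :
  injective g -> c != 1 -> (forall x, G (g x) = c * G x) ->
  \sum_x G x = 0.
Proof.
move=> g_inj c_neq1 Gg.
have S_eq : \sum_x G x = c * \sum_x G x.
  by rewrite {1}(reindex_inj g_inj) mulr_sumr; apply: eq_bigr => x _.
apply/eqP; move/eqP: S_eq; rewrite -subr_eq0 -{1}[\sum_x G x]mul1r -mulrBl.
by rewrite mulf_eq0 subr_eq0 eq_sym (negbTE c_neq1).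
Qed.

Lemma prim_root_expr_neq1 (F : nzRingType) (n k : nat) (w : F) :
  n.-primitive_root w -> (0 < k < n)%N -> w ^+ k != 1.
Proof.
by move=> w_prim /andP[k_gt0 k_ltn]; rewrite -(prim_order_dvd w_prim) gtnNdvd.
Qed.

Section UnitalFunctional.
Variables (R : realType) (U : algType R[i]) (phit : U -> R[i]).
Hypothesis phit_unital : unital_functional phit.

Lemma unital_functionalD x y : phit (x + y) = phit x + phit y.
Proof. by have := phit_unital.1 1 x y; rewrite scale1r mul1r. Qed.

Lemma unital_functional0 : phit 0 = 0.
Proof.
by apply: (addrI (phit 0)); rewrite -unital_functionalD !addr0.
Qed.

Lemma unital_functionalZ a x : phit (a *: x) = a * phit x.
Proof. by rewrite -[a *: x]addr0 phit_unital.1 unital_functional0 addr0. Qed.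

Lemma unital_functional_sum (T : finType) (F : T -> U) :
  phit (\sum_t F t) = \sum_t phit (F t).
Proof. exact: (big_morph phit unital_functionalD unital_functional0). Qed.

(* The copies in [X_omega] are numbered from 1, hence the index [f j + 1]. *)
Lemma moment_X_omega_expansion (A : algType R[i]) (iota : nat -> A -> U)
    (m n : nat) (w : R[i]) (X : 'I_m -> A) :
  phit (\prod_(j < m) X_omega iota n w (X j)) =
  \sum_(f : {ffun 'I_m -> 'I_n})
    (\prod_(j < m) w ^+ (f j).+1) * mixed_moment phit iota X (fun j => (f j).+1).
Proof.
have -> : \prod_(j < m) X_omega iota n w (X j) =
          \prod_(j < m) \sum_(k < n) w ^+ k.+1 *: iota k.+1 (X j).
  by apply: eq_bigr => j _; rewrite /X_omega big_add1 big_mkord.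
rewrite bigA_distr_bigA unital_functional_sum; apply: eq_bigr => f _.
by rewrite scaler_prod unital_functionalZ.
Qed.

End UnitalFunctional.

Lemma gen_subalg_family (R : realType) (A : algType R[i]) (n : nat)
    (X : 'I_n -> A) (S : {set 'I_n}) j :
  j \in S -> gen_subalg (family_set X S) (X j).
Proof. by move=> jS T _ ST; apply: ST; exists j. Qed.

Section IndependentFamilies.
Variables (R : realType) (A U : algType R[i]) (phit : U -> R[i]).
Variables (iota : nat -> A -> U) (n : nat) (X : 'I_n -> A) (I : {set 'I_n}).
Hypothesis X_indep : E_independent_families phit iota X I (~: I).

Lemma independent_families_moment_eq (h h' : 'I_n -> nat) :
  same_kernel_on (mem I) true h h' -> same_kernel_on (mem I) false h h' ->
  mixed_moment phit iota X h = mixed_moment phit iota X h'.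
Proof.
apply: X_indep => j /=.
by case: ifP => jI; apply: gen_subalg_family; rewrite ?inE ?jI.
Qed.

Lemma independent_families_moment_relabel (T : Type) (label : T -> nat)
    (s : T -> T) (f : 'I_n -> T) :
  injective label -> injective s ->
  mixed_moment phit iota X (label \o f) =
  mixed_moment phit iota X (fun j => label (if j \in I then s (f j) else f j)).
Proof.
move=> label_inj s_inj; apply: independent_families_moment_eq => j k /= -> ->.
  by split=> [/label_inj -> // | /label_inj/s_inj ->].
by split=> [/label_inj -> | /label_inj ->].
Qed.

End IndependentFamilies.

Definition rotate_on (n : nat) (I : {set 'I_n}) (f : {ffun 'I_n -> 'I_n})
  : {ffun 'I_n -> 'I_n} := [ffun j => if j \in I then ordS (f j) else f j].

Lemma rotate_on_inj (n : nat) (I : {set 'I_n}) : injective (rotate_on I).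
Proof.
move=> f1 f2 /ffunP eq_f; apply/ffunP => j; have := eq_f j; rewrite !ffunE.
by case: (j \in I) => //; apply: ordS_inj.
Qed.

Lemma prod_expr_rotate_on (F : comNzRingType) (n : nat) (w : F)
    (I : {set 'I_n}) (f : {ffun 'I_n -> 'I_n}) :
  w ^+ n = 1 ->
  \prod_(j < n) w ^+ (rotate_on I f j).+1 =
  (\prod_(j < n) w ^+ (f j).+1) * w ^+ #|I|.
Proof.
move=> wn; rewrite -prodr_const [X in _ * X]big_mkcond -big_split /=.
apply: eq_bigr => j _; rewrite ffunE; case: ifP => _; last by rewrite mulr1.
by rewrite exprS /= expr_mod // -exprSr.
Qed.

Theorem proposition2p2 (R : realType) (A U : algType R[i])
  (phi : A -> R[i]) (phit : U -> R[i]) (iota : nat -> A -> U)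
  (hphi : unital_functional phi) (hE : exch_system phi phit iota)
  (n : nat) (hn : (1 <= n)%N) (w : R[i]) (hw : n.-primitive_root w)
  (X : 'I_n -> A) (I : {set 'I_n})
  (hI0 : I != set0) (hIT : I != setT)
  (hind : E_independent_families phit iota X I (~: I)) :
  cumulant phit iota w X = 0.
Proof.
have [phit_unital _ _ _] := hE.
have wn : w ^+ n = 1 by apply: prim_expr_order.
have card_I : (0 < #|I| < n)%N.
  rewrite card_gt0 hI0 /= -[X in (_ < X)%N]card_ord -cardsT.
  by apply: proper_card; rewrite properT.
rewrite /cumulant moment_X_omega_expansion //.
rewrite (sum_eq0_reindex_scale (@rotate_on_inj n I)
           (prim_root_expr_neq1 hw card_I)) ?mulr0 // => f.
have succ_inj : injective (fun k : 'I_n => k.+1) by move=> k l /succn_inj/val_inj.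
rewrite prod_expr_rotate_on // -mulrA mulrCA; congr (_ * (_ * _)); symmetry.
apply: etrans (independent_families_moment_relabel hind f succ_inj (@ordS_inj n)) _.
by rewrite /mixed_moment; apply: congr1; apply: eq_bigr => j _; rewrite ffunE.
Qed.
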